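(* In the stochastic epidemic model described in the context, let $u(k)=K\,I(k)$ for all $k\ge0$ with a constant gain $0\le K\le (1-d_{\max})/v_{\max}$. Then: (i) $0\le I(k)\le (1+\delta_{\max}-Kv_{\min})^kI_0$ for all $k\ge1$ with probability one; (ii) if $K<(1-d_{\max})/v_{\max}$, then $I(k)>0$ for all $k\ge1$ with probability one.
   Context: Time is indexed by days $k=0,1,2,\dots$. Let $(\delta(k))_{k\ge0}$, $(d_I(k))_{k\ge0}$, $(v(k))_{k\ge0}$ be three mutually independent sequences of random variables, each sequence i.i.d. in $k$, with $0\le \delta(k)\le \delta_{\max}$, $0\le d_I(k)\le d_{\max}$ where $d_{\max}<1$, and $0<v_{\min}\le v(k)\le v_{\max}\le 1$. Given a control sequence $u(k)$, the cases evolve by $S(k+1)=S(k)-\delta(k)I(k)$, $I(k+1)=(1+\delta(k))I(k)-v(k)u(k)-d_I(k)I(k)$, $R(k+1)=R(k)+v(k)u(k)$, $D(k+1)=D(k)+d_I(k)I(k)$, with $S(0)=S_0$, $I(0)=I_0>0$, $R(0)=D(0)=0$, $I_0\delta_{\max}<S_0$. *)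

From HB Require Import structures.
From mathcomp Require Import all_boot all_order all_algebra.
From mathcomp Require Import all_classical all_reals all_analysis.
Set Implicit Arguments. Unset Strict Implicit. Unset Printing Implicit Defensive.
Import Order.TTheory GRing.Theory Num.Theory.
Local Open Scope classical_set_scope.
Local Open Scope ring_scope.

Definition mutually_independent {d} {T : measurableType d} {R : realType}
  (P : probability T R) (I : eqType) (X : I -> T -> R) : Prop :=
  forall (s : seq I) (B : I -> set R),
    uniq s -> (forall i, measurable (B i)) ->
    P (\big[setI/setT]_(i <- s) (X i @^-1` B i)) =
    (\prod_(i <- s) P (X i @^-1` B i))%E.

Definition identically_distributed {d} {T : measurableType d} {R : realType}
  (P : probability T R) (X : nat -> T -> R) : Prop :=
  forall (k : nat) (B : set R), measurable B ->
    P (X k @^-1` B) = P (X 0%N @^-1` B).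

Definition three_indep_iid {d} {T : measurableType d} {R : realType}
  (P : probability T R) (delta dI v : nat -> T -> R) : Prop :=
  (forall k, measurable_fun setT (delta k)) /\
  (forall k, measurable_fun setT (dI k)) /\
  (forall k, measurable_fun setT (v k)) /\
  identically_distributed P delta /\
  identically_distributed P dI /\
  identically_distributed P v /\
  mutually_independent P
    (fun jk : 'I_3 * nat =>
       if nat_of_ord jk.1 == 0%N then delta jk.2
       else if nat_of_ord jk.1 == 1%N then dI jk.2 else v jk.2).

Definition epidemic_dynamics {R : realType} (delta dI v u S I Rc D : nat -> R)
  (S0 I0 : R) : Prop :=
  S 0%N = S0 /\ I 0%N = I0 /\ Rc 0%N = 0 /\ D 0%N = 0 /\
  forall k : nat,
    S k.+1 = S k - delta k * I k /\
    I k.+1 = (1 + delta k) * I k - v k * u k - dI k * I k /\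
    Rc k.+1 = Rc k + v k * u k /\
    D k.+1 = D k + dI k * I k.

(** Under the feedback [u = K I] the infected count obeys the linear recursion
    [I (k+1) = (1 + delta k - K v k - d_I k) I k].  The admissible range of [K]
    makes every growth factor lie between [delta k >= 0] and
    [1 + delta_max - K v_min], so the bounds hold along every sample path, and
    a fortiori almost surely. *)
From HB Require Import structures.
From mathcomp Require Import all_boot all_order all_algebra.
From mathcomp Require Import all_classical all_reals all_analysis.
From mathcomp Require Import lra.
Set Implicit Arguments. Unset Strict Implicit. Unset Printing Implicit Defensive.
Import Order.TTheory GRing.Theory Num.Theory.
Local Open Scope classical_set_scope.
Local Open Scope ring_scope.

Section LinearRecursion.
Variables (R : realDomainType) (a x : nat -> R).
Hypothesis x_rec : forall k, x k.+1 = a k * x k.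

Lemma linear_recursion_bounded (c : R) :
  0 <= x 0%N -> (forall k, 0 <= a k <= c) ->
  forall k, 0 <= x k <= c ^+ k * x 0%N.
Proof.
move=> x0_ge0 a_bnd; elim=> [|k /andP[xk_ge0 xk_le]].
  by rewrite expr0 mul1r lexx x0_ge0.
have /andP[ak_ge0 ak_le] := a_bnd k.
rewrite x_rec exprS -mulrA mulr_ge0 //=.
apply: (le_trans (ler_wpM2r xk_ge0 ak_le)).
by rewrite ler_wpM2l // (le_trans ak_ge0 ak_le).
Qed.

Lemma linear_recursion_gt0 :
  0 < x 0%N -> (forall k, 0 < a k) -> forall k, 0 < x k.
Proof. by move=> x0_gt0 a_gt0; elim=> // k xk_gt0; rewrite x_rec mulr_gt0. Qed.

End LinearRecursion.

Lemma epidemic_feedback_rec (R : realType) (delta dI v u S I Rc D : nat -> R)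
    (S0 I0 K : R) :
  epidemic_dynamics delta dI v u S I Rc D S0 I0 -> (forall k, u k = K * I k) ->
  forall k, I k.+1 = (1 + delta k - K * v k - dI k) * I k.
Proof.
move=> [_ [_ [_ [_ dyn]]]] uE k; have [_ [-> _]] := dyn k.
by rewrite uE; lra.
Qed.

Lemma feedback_factor_bounds (R : realDomainType)
    (delta dI v delta_max d_max v_min v_max K : R) :
  0 <= delta <= delta_max -> 0 <= dI <= d_max -> v_min <= v <= v_max -> 0 <= K ->
  delta + (1 - d_max - K * v_max) <= 1 + delta - K * v - dI
    <= 1 + delta_max - K * v_min.
Proof.
move=> /andP[? ?] /andP[? ?] /andP[vmin_le vmax_ge] K_ge0.
have := ler_wpM2l K_ge0 vmin_le; have := ler_wpM2l K_ge0 vmax_ge.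
by move=> ? ?; apply/andP; split; lra.
Qed.

Theorem lemma6 (R : realType) (d : measure_display) (T : measurableType d)
  (P : probability T R)
  (delta dI v : nat -> T -> R)
  (delta_max d_max v_min v_max S0 I0 K : R)
  (S I Rc D u : nat -> T -> R) :
  three_indep_iid P delta dI v ->
  (forall k w, 0 <= delta k w <= delta_max) ->
  (forall k w, 0 <= dI k w <= d_max) -> d_max < 1 ->
  (forall k w, v_min <= v k w <= v_max) -> 0 < v_min -> v_max <= 1 ->
  0 < I0 -> I0 * delta_max < S0 ->
  (forall w, epidemic_dynamics (fun k => delta k w) (fun k => dI k w)
       (fun k => v k w) (fun k => u k w) (fun k => S k w) (fun k => I k w)
       (fun k => Rc k w) (fun k => D k w) S0 I0) ->
  (forall k w, u k w = K * I k w) ->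
  0 <= K -> K <= (1 - d_max) / v_max ->
  {ae P, forall w, forall k : nat, (1 <= k)%N ->
      0 <= I k w <= (1 + delta_max - K * v_min) ^+ k * I0}
  /\
  (K < (1 - d_max) / v_max ->
   {ae P, forall w, forall k : nat, (1 <= k)%N -> 0 < I k w}).
Proof.
move=> _ delta_bnd dI_bnd _ v_bnd vmin_gt0 _ I0_gt0 _ dyn uE K_ge0 K_le.
have vmax_gt0 : 0 < v_max.
  have /andP[vmin_le vmax_ge] := v_bnd 0%N point.
  exact: lt_le_trans vmin_gt0 (le_trans vmin_le vmax_ge).
have I_rec w := epidemic_feedback_rec (dyn w) (fun k => uE k w).
have I0E w : I 0%N w = I0 by have [_ [-> _]] := dyn w.
have factor_bnd k w :=
  feedback_factor_bounds (delta_bnd k w) (dI_bnd k w) (v_bnd k w) K_ge0.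
have delta_ge0 k w : 0 <= delta k w by have /andP[] := delta_bnd k w.
split=> [|K_lt]; apply: aeW => w k _.
  have margin_ge0 : 0 <= 1 - d_max - K * v_max.
    by rewrite subr_ge0 -ler_pdivlMr.
  rewrite -(I0E w); apply: (linear_recursion_bounded (I_rec w)).
    by rewrite I0E ltW.
  move=> {}k; have /andP[lo ->] := factor_bnd k w; rewrite andbT.
  exact: le_trans (addr_ge0 (delta_ge0 k w) margin_ge0) lo.
have margin_gt0 : 0 < 1 - d_max - K * v_max by rewrite subr_gt0 -ltr_pdivlMr.
apply: (linear_recursion_gt0 (I_rec w)); first by rewrite I0E.
move=> {}k; have /andP[lo _] := factor_bnd k w.
exact: lt_le_trans (ltr_wpDl (delta_ge0 k w) margin_gt0) lo.
Qed.
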